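(* Let $\Gamma=(V,E)$ be a graph, for each $v\in V$ let $C_v$ be a left LCM monoid, and let $C=\Gamma_{v\in V}C_v$. Then for each $v\in V$, the inverse hull $IH^0(C_v)$ embeds in $IH^0(C)$, i.e. there is an injective monoid homomorphism $IH^0(C_v)\to IH^0(C)$.
   Context: A graph $\Gamma=(V,E)$ has vertex set $V$ and irreflexive symmetric edge relation $E$. The graph product $\Gamma_{v\in V}C_v$ of pairwise disjoint monoids $C_v$ is the quotient of their free product by the congruence generated by all $(mn,nm)$ with $m\in C_u$, $n\in C_v$, $(u,v)\in E$. A left LCM monoid is a right cancellative monoid in which the intersection of any two principal left ideals is empty or principal. For a right cancellative monoid $D$ and $a\in D$, $\rho_a:D\to D$, $x\mapsto xa$, is regarded as an element of the symmetric inverse monoid of all partial bijections of $D$; the inverse hull $IH(D)$ is the inverse submonoid generated by all $\rho_a$, and $IH^0(D)=IH(D)\cup\{\emptyset\}$ with the empty map as zero. *)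

From Stdlib Require Import List IndefiniteDescription.
Import ListNotations.
Set Implicit Arguments.

Record Monoid := {
  mcar :> Type;
  mmul : mcar -> mcar -> mcar;
  mone : mcar;
  massoc : forall x y z, mmul x (mmul y z) = mmul (mmul x y) z;
  mone_l : forall x, mmul mone x = x;
  mone_r : forall x, mmul x mone = x }.
Arguments mmul {m} _ _.
Arguments mone {m}.

Definition right_cancellative (M : Monoid) : Prop :=
  forall x y a : M, mmul x a = mmul y a -> x = y.

Definition in_left_ideal {M : Monoid} (a x : M) : Prop :=
  exists y : M, x = mmul y a.

Definition left_LCM (M : Monoid) : Prop :=
  right_cancellative M /\
  forall a b : M,
    (forall x, ~ (in_left_ideal a x /\ in_left_ideal b x)) \/
    (exists c : M, forall x,
        (in_left_ideal a x /\ in_left_ideal b x) <-> in_left_ideal c x).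

Definition is_graph (V : Type) (E : V -> V -> Prop) : Prop :=
  (forall v, ~ E v v) /\ (forall u v, E u v -> E v u).

Section GraphProduct.
Variables (V : Type) (E : V -> V -> Prop) (C : V -> Monoid).

Definition letter := {v : V & mcar (C v)}.
Definition word := list letter.
Definition lt (v : V) (a : C v) : letter := existT (fun w => mcar (C w)) v a.

Inductive gp_step : word -> word -> Prop :=
| gs_one v : gp_step [lt v mone] []
| gs_mul v (a b : C v) : gp_step [lt v a; lt v b] [lt v (mmul a b)]
| gs_comm u v (m : C u) (n : C v) :
    E u v -> gp_step [lt u m; lt v n] [lt v n; lt u m].

Inductive gp_cong : word -> word -> Prop :=
| gc_step p l r s : gp_step l r -> gp_cong (p ++ l ++ s) (p ++ r ++ s)
| gc_refl w : gp_cong w w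
| gc_sym w1 w2 : gp_cong w1 w2 -> gp_cong w2 w1
| gc_trans w1 w2 w3 : gp_cong w1 w2 -> gp_cong w2 w3 -> gp_cong w1 w3.

(** the graph product: the quotient of words by gp_cong (congruence classes) *)
Definition GP : Type := {P : word -> Prop | exists w, P = gp_cong w}.
Definition gp_class (w : word) : GP :=
  exist _ (gp_cong w) (ex_intro _ w eq_refl).
Definition gp_rep (p : GP) : word :=
  proj1_sig (constructive_indefinite_description _ (proj2_sig p)).
Definition gp_mul (p q : GP) : GP := gp_class (gp_rep p ++ gp_rep q).
End GraphProduct.

Definition prel (X : Type) := X -> X -> Prop.
Definition releq (X : Type) (f g : prel X) : Prop := forall x y, f x y <-> g x y.
(** composition: first f, then g *)
Definition rcomp (X : Type) (f g : prel X) : prel X :=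
  fun x z => exists y, f x y /\ g y z.
Definition rinv (X : Type) (f : prel X) : prel X := fun x y => f y x.
Definition rempty (X : Type) : prel X := fun _ _ => False.
Definition rho (X : Type) (mul : X -> X -> X) (a : X) : prel X :=
  fun x y => y = mul x a.

Inductive IH (X : Type) (mul : X -> X -> X) : prel X -> Prop :=
| IH_id : IH mul (@eq X)
| IH_r a f : IH mul f -> IH mul (rcomp f (rho mul a))
| IH_ri a f : IH mul f -> IH mul (rcomp f (rinv (rho mul a)))
| IH_ext f g : IH mul f -> releq f g -> IH mul g.

Definition IH0 (X : Type) (mul : X -> X -> X) (f : prel X) : Prop :=
  IH mul f \/ releq f (@rempty X).

(* Every element X of the graph product factors as X = head(X) * incl(t), where
   t in C_v is the v-letter that can be shuffled to the right end of a reduced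
   word for X; right multiplication by incl(d) changes t into t d and keeps
   head(X).  This is read off a normal form, obtained by letting each letter act
   on reduced words and checking that the action respects the defining
   relations.  Hence Z incl(d) = Y incl(a) forces Z = W incl(p), Y = W incl(q)
   with p d = q a.  Since the elements of IH(C_v) commute with left
   multiplication, f |-> {(Z incl(c), Z incl(d)) | f c d} sends rho_a to
   rho_(incl a), preserves composition, and is injective (take Z = 1). *)

From Stdlib Require Import List Relations ClassicalEpsilon ProofIrrelevance
  FunctionalExtensionality PropExtensionality.
Import ListNotations.

Definition left_invariant {M : Monoid} (f : prel M) : Prop :=
  forall p c d, f c d -> f (mmul p c) (mmul p d).

Lemma IH0_left_invariant (M : Monoid) (f : prel M) : IH0 (@mmul M) f -> left_invariant f.
Proof.
  intros [H|H].
  - induction H as [|a f Hf IHf|a f Hf IHf|f g Hf IHf Hfg]; intros p c d Hcd.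
    + subst; reflexivity.
    + destruct Hcd as (e & H1 & H2). exists (mmul p e). split; auto.
      unfold rho in *. rewrite H2. apply massoc.
    + destruct Hcd as (e & H1 & H2). exists (mmul p e). split; auto.
      unfold rinv, rho in *. rewrite H2. apply massoc.
    + apply Hfg, IHf, Hfg, Hcd.
  - intros p c d Hcd. apply H in Hcd. contradiction.
Qed.

Lemma releq_sym (X : Type) (f g : prel X) : releq f g -> releq g f.
Proof. intros H x y; split; apply H. Qed.

Section Embedding.
Variables (V : Type) (E : V -> V -> Prop) (C : V -> Monoid).
Hypothesis E_irrefl : forall u, ~ E u u.
Hypothesis E_sym : forall u w, E u w -> E w u.

Local Notation dec := excluded_middle_informative.
Local Notation L := (letter C).
Local Notation gc := (@gp_cong V E C).

Definition is_one (x : L) : Prop := projT2 x = mone.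

Definition adjacent (u : V) (b : L) : Prop := E (projT1 b) u.

Definition merge (y x : L) : L :=
  match dec (projT1 y = projT1 x) with
  | left e => existT (fun w => mcar (C w)) (projT1 x)
                (mmul (eq_rect _ (fun w => mcar (C w)) (projT2 y) _ e) (projT2 x))
  | right _ => x
  end.

Lemma merge_same u (a b : C u) :
  merge (existT _ u a) (existT _ u b) = existT _ u (mmul a b).
Proof.
  unfold merge; simpl. destruct (dec (u = u)) as [e|n].
  - rewrite (proof_irrelevance _ e eq_refl). reflexivity.
  - exfalso; auto.
Qed.

Lemma merge_vertex y x : projT1 (merge y x) = projT1 x.
Proof. unfold merge. destruct (dec _); reflexivity. Qed.

Definition merge_drop (y x : L) : list L :=
  if dec (is_one (merge y x)) then [] else [merge y x].

Lemma merge_drop_adjacent u y x :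
  adjacent u x -> Forall (adjacent u) (merge_drop y x).
Proof.
  unfold merge_drop, adjacent. intros H.
  destruct (dec _); constructor; auto. rewrite merge_vertex. exact H.
Qed.

Lemma rev_merge_drop y x : rev (merge_drop y x) = merge_drop y x.
Proof. unfold merge_drop. destruct (dec _); reflexivity. Qed.

(* Words are stored reversed: the head of a list is the rightmost letter.
   [find_vertex u S] locates the rightmost letter of vertex [u] that can be
   shuffled to the right end, i.e. which is preceded only by letters adjacent to [u]. *)
Fixpoint find_vertex (u : V) (S : list L) : option (list L * L * list L) :=
  match S with
  | [] => None
  | y :: S' =>
      if dec (projT1 y = u) then Some ([], y, S')
      else if dec (E (projT1 y) u) then
        match find_vertex u S' with
        | Some (B, z, A) => Some (y :: B, z, A)
        | None => None
        end
      else None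
  end.

Lemma find_vertex_sound u S B y A : find_vertex u S = Some (B, y, A) ->
  S = B ++ y :: A /\ projT1 y = u /\ Forall (adjacent u) B.
Proof.
  revert B; induction S as [|z S IH]; intros B H; simpl in H; [discriminate|].
  destruct (dec (projT1 z = u)).
  - inversion H; subst; simpl; auto.
  - destruct (dec (E (projT1 z) u)); [|discriminate].
    destruct (find_vertex u S) as [[[B' z'] A']|]; [|discriminate].
    inversion H; subst. destruct (IH _ eq_refl) as [-> [? ?]]. simpl; auto.
Qed.

Lemma find_vertex_skip u B T : Forall (adjacent u) B ->
  find_vertex u (B ++ T) = match find_vertex u T with
                           | Some (B', y, A) => Some (B ++ B', y, A)
                           | None => None end.
Proof.
  induction 1 as [|b B Hb HB IH]; simpl.
  - destruct (find_vertex u T) as [[[? ?] ?]|]; reflexivity.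
  - destruct (dec (projT1 b = u)) as [e|_].
    + exfalso. unfold adjacent in Hb. rewrite e in Hb. eapply E_irrefl; eauto.
    + destruct (dec (E (projT1 b) u)); [|contradiction].
      rewrite IH. destruct (find_vertex u T) as [[[? ?] ?]|]; reflexivity.
Qed.

Lemma find_vertex_at u B y A : Forall (adjacent u) B -> projT1 y = u ->
  find_vertex u (B ++ y :: A) = Some (B, y, A).
Proof.
  intros HB Hy. rewrite find_vertex_skip by auto. simpl.
  destruct (dec (projT1 y = u)); [|contradiction]. rewrite app_nil_r; reflexivity.
Qed.

Lemma find_vertex_none_remove u B z A : find_vertex u (B ++ z :: A) = None ->
  adjacent u z -> find_vertex u (B ++ A) = None.
Proof.
  unfold adjacent. induction B as [|b B IH]; simpl; intros H Hz.
  - destruct (dec (projT1 z = u)); [discriminate|].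
    destruct (dec (E (projT1 z) u)); [|contradiction].
    destruct (find_vertex u A) as [[[? ?] ?]|]; [discriminate|reflexivity].
  - destruct (dec (projT1 b = u)); [discriminate|].
    destruct (dec (E (projT1 b) u)); [|reflexivity].
    destruct (find_vertex u (B ++ z :: A)) as [[[? ?] ?]|]; [discriminate|].
    rewrite IH; auto.
Qed.

Lemma find_vertex_none_insert u B z A : find_vertex u (B ++ A) = None ->
  adjacent u z -> find_vertex u (B ++ z :: A) = None.
Proof.
  unfold adjacent. induction B as [|b B IH]; simpl; intros H Hz.
  - destruct (dec (projT1 z = u)) as [e|].
    { rewrite e in Hz; exfalso; eapply E_irrefl; eauto. }
    destruct (dec (E (projT1 z) u)); [|contradiction]. rewrite H; reflexivity.
  - destruct (dec (projT1 b = u)); [discriminate|].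
    destruct (dec (E (projT1 b) u)); [|reflexivity].
    destruct (find_vertex u (B ++ A)) as [[[? ?] ?]|]; [discriminate|].
    rewrite IH; auto.
Qed.

Lemma find_vertex_none_replace u B y y' A : find_vertex u (B ++ y :: A) = None ->
  projT1 y' = projT1 y -> find_vertex u (B ++ y' :: A) = None.
Proof.
  induction B as [|b B IH]; simpl; intros H Hv.
  - rewrite Hv. destruct (dec (projT1 y = u)); [discriminate|].
    destruct (dec (E (projT1 y) u)); [|reflexivity].
    destruct (find_vertex u A) as [[[? ?] ?]|]; [discriminate|reflexivity].
  - destruct (dec (projT1 b = u)); [discriminate|].
    destruct (dec (E (projT1 b) u)); [|reflexivity].
    destruct (find_vertex u (B ++ y :: A)) as [[[? ?] ?]|]; [discriminate|].
    rewrite IH; auto.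
Qed.

Lemma find_vertex_none_merge_drop w B y x A : find_vertex w (B ++ y :: A) = None ->
  adjacent w y -> projT1 x = projT1 y -> find_vertex w (B ++ merge_drop y x ++ A) = None.
Proof.
  intros H Hy Hx. assert (H' : find_vertex w (B ++ A) = None) by (eapply find_vertex_none_remove; eauto).
  unfold merge_drop. destruct (dec _); simpl; auto.
  apply find_vertex_none_insert; auto. unfold adjacent. rewrite merge_vertex, Hx. auto.
Qed.

(** * Right multiplication of a reduced word by a letter *)

Definition push (S : list L) (x : L) : list L :=
  match find_vertex (projT1 x) S with
  | Some (B, y, A) => B ++ merge_drop y x ++ A
  | None => if dec (is_one x) then S else x :: S
  end.

Fixpoint reduced (S : list L) : Prop :=
  match S with
  | [] => True
  | y :: A => ~ is_one y /\ find_vertex (projT1 y) A = None /\ reduced A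
  end.

Lemma reduced_app_r B A : reduced (B ++ A) -> reduced A.
Proof. induction B; simpl; tauto. Qed.

Lemma reduced_letter B y A : reduced (B ++ y :: A) ->
  ~ is_one y /\ find_vertex (projT1 y) A = None.
Proof. intros H. apply reduced_app_r in H. simpl in H. tauto. Qed.

Lemma reduced_remove u B y A : reduced (B ++ y :: A) -> Forall (adjacent u) B ->
  projT1 y = u -> reduced (B ++ A).
Proof.
  induction B as [|b B IH]; simpl; intros H HB Hy.
  - tauto.
  - inversion HB as [|? ? Hb]; subst. destruct H as [Hb1 [Hb2 HR]].
    split; [auto|split; [|auto]].
    eapply find_vertex_none_remove; [exact Hb2|]. apply E_sym, Hb.
Qed.

Lemma reduced_replace B y y' A : reduced (B ++ y :: A) -> projT1 y' = projT1 y ->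
  ~ is_one y' -> reduced (B ++ y' :: A).
Proof.
  induction B as [|b B IH]; simpl; intros H Hv Hn.
  - rewrite Hv. tauto.
  - destruct H as [Hb1 [Hb2 HR]]. split; [auto|split; [|auto]].
    eapply find_vertex_none_replace; eauto.
Qed.

Lemma reduced_push S x : reduced S -> reduced (push S x).
Proof.
  intros HR. unfold push.
  destruct (find_vertex (projT1 x) S) as [[[B y] A]|] eqn:Hs.
  - apply find_vertex_sound in Hs as (-> & Hy & HB).
    unfold merge_drop. destruct (dec _); simpl.
    + eapply reduced_remove; eauto.
    + eapply reduced_replace; eauto. rewrite Hy. apply merge_vertex.
  - destruct (dec (is_one x)); simpl; auto.
Qed.

Lemma reduced_push_all s S : reduced S -> reduced (fold_left push s S).
Proof. revert S; induction s; simpl; auto using reduced_push. Qed.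

Inductive shuffle : list L -> list L -> Prop :=
| shuffle_swap (P : list L) (a b : L) (Q : list L) : E (projT1 a) (projT1 b) ->
    shuffle (P ++ a :: b :: Q) (P ++ b :: a :: Q).

Local Notation shuffle_eq := (clos_refl_sym_trans _ shuffle).

Lemma shuffle_eq_swap P a b Q : E (projT1 a) (projT1 b) ->
  shuffle_eq (P ++ a :: b :: Q) (P ++ b :: a :: Q).
Proof. intros; apply rst_step; constructor; auto. Qed.

Lemma shuffle_eq_prefix P S S' : shuffle_eq S S' -> shuffle_eq (P ++ S) (P ++ S').
Proof.
  induction 1 as [S S' [Q a b R Hab]| | |]; try solve [econstructor; eauto].
  rewrite !app_assoc. apply shuffle_eq_swap; auto.
Qed.

Lemma shuffle_eq_move x B A : Forall (adjacent (projT1 x)) B ->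
  shuffle_eq (x :: B ++ A) (B ++ x :: A).
Proof.
  induction 1 as [|b B Hb HB IH]; simpl.
  - apply rst_refl.
  - eapply rst_trans.
    + apply (shuffle_eq_swap [] x b (B ++ A)). apply E_sym, Hb.
    + apply (shuffle_eq_prefix [b]), IH.
Qed.

Inductive find_swap_spec (u : V) (P : list L) (a b : L) (Q : list L) : Prop :=
| FindSwapNone :
    find_vertex u (P ++ a :: b :: Q) = None ->
    find_vertex u (P ++ b :: a :: Q) = None -> find_swap_spec u P a b Q
| FindSwapBefore (B : list L) (y : L) (P2 : list L) : P = B ++ y :: P2 ->
    find_vertex u (P ++ a :: b :: Q) = Some (B, y, P2 ++ a :: b :: Q) ->
    find_vertex u (P ++ b :: a :: Q) = Some (B, y, P2 ++ b :: a :: Q) ->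
    find_swap_spec u P a b Q
| FindSwapLeft : projT1 a = u ->
    find_vertex u (P ++ a :: b :: Q) = Some (P, a, b :: Q) ->
    find_vertex u (P ++ b :: a :: Q) = Some (P ++ [b], a, Q) -> find_swap_spec u P a b Q
| FindSwapRight : projT1 b = u ->
    find_vertex u (P ++ a :: b :: Q) = Some (P ++ [a], b, Q) ->
    find_vertex u (P ++ b :: a :: Q) = Some (P, b, a :: Q) -> find_swap_spec u P a b Q
| FindSwapAfter (B' : list L) (y : L) (A : list L) :
    find_vertex u (P ++ a :: b :: Q) = Some (P ++ a :: b :: B', y, A) ->
    find_vertex u (P ++ b :: a :: Q) = Some (P ++ b :: a :: B', y, A) ->
    find_swap_spec u P a b Q.

Local Ltac decide_all :=
  repeat match goal with |- context [dec ?P] => destruct (dec P); try contradiction end.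

Lemma find_swap_nil u a b Q : E (projT1 a) (projT1 b) -> find_swap_spec u [] a b Q.
Proof.
  intros Hab. destruct (dec (projT1 a = u)) as [ea|na].
  { assert (nb : projT1 b <> u).
    { intros eb. apply (@E_irrefl u). rewrite <- ea at 1. rewrite <- eb. exact Hab. }
    assert (Eb : E (projT1 b) u) by (rewrite <- ea; apply E_sym, Hab).
    apply FindSwapLeft; simpl; decide_all; auto. }
  destruct (dec (projT1 b = u)) as [eb|nb].
  { assert (Ea : E (projT1 a) u) by (rewrite <- eb; exact Hab).
    apply FindSwapRight; simpl; decide_all; auto. }
  destruct (dec (E (projT1 a) u)) as [Ea|nEa]; [destruct (dec (E (projT1 b) u)) as [Eb|nEb]|].
  - destruct (find_vertex u Q) as [[[B' y] A]|] eqn:HQ.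
    + apply FindSwapAfter with (B' := B') (y := y) (A := A);
        simpl; decide_all; rewrite HQ; reflexivity.
    + apply FindSwapNone; simpl; decide_all; rewrite HQ; reflexivity.
  - apply FindSwapNone; simpl; decide_all;
      destruct (find_vertex u Q) as [[[? ?] ?]|]; reflexivity.
  - apply FindSwapNone; simpl; decide_all; reflexivity.
Qed.

Lemma find_swap_cons u p P a b Q :
  find_swap_spec u P a b Q -> find_swap_spec u (p :: P) a b Q.
Proof.
  intros Hs. destruct (dec (projT1 p = u)) as [ep|np].
  { apply FindSwapBefore with (B := []) (y := p) (P2 := P); simpl; decide_all; reflexivity. }
  destruct (dec (E (projT1 p) u)) as [Ep|nEp].
  2: { apply FindSwapNone; simpl; decide_all; reflexivity. }
  destruct Hs as [H1 H2|B y P2 -> H1 H2|ea H1 H2|eb H1 H2|B' y A H1 H2].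
  - apply FindSwapNone; simpl; decide_all; rewrite ?H1, ?H2; reflexivity.
  - apply FindSwapBefore with (B := p :: B) (y := y) (P2 := P2);
      simpl; decide_all; rewrite ?H1, ?H2; reflexivity.
  - apply FindSwapLeft; [exact ea| |]; simpl; decide_all; rewrite ?H1, ?H2; reflexivity.
  - apply FindSwapRight; [exact eb| |]; simpl; decide_all; rewrite ?H1, ?H2; reflexivity.
  - apply FindSwapAfter with (B' := B') (y := y) (A := A);
      simpl; decide_all; rewrite ?H1, ?H2; reflexivity.
Qed.

Lemma find_swap u P a b Q : E (projT1 a) (projT1 b) -> find_swap_spec u P a b Q.
Proof.
  intros Hab. induction P; [apply find_swap_nil | apply find_swap_cons]; auto.
Qed.

Lemma push_shuffle S S' x : shuffle S S' -> shuffle_eq (push S x) (push S' x).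
Proof.
  destruct 1 as [P a b Q Hab]. unfold push.
  destruct (@find_swap (projT1 x) P a b Q Hab)
    as [H1 H2|B y P2 -> H1 H2|ea H1 H2|eb H1 H2|B' y A H1 H2]; rewrite H1, H2.
  - destruct (dec (is_one x)).
    + apply shuffle_eq_swap; auto.
    + apply (shuffle_eq_swap (x :: P)); auto.
  - rewrite !app_assoc. apply shuffle_eq_swap; auto.
  - rewrite <- app_assoc. simpl. unfold merge_drop. destruct (dec _).
    + apply rst_refl.
    + apply shuffle_eq_swap. rewrite merge_vertex, <- ea. exact Hab.
  - rewrite <- app_assoc. simpl. unfold merge_drop. destruct (dec _).
    + apply rst_refl.
    + apply shuffle_eq_swap. rewrite merge_vertex, <- eb. exact Hab.
  - rewrite <- !app_assoc. simpl. apply shuffle_eq_swap; auto.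
Qed.

Lemma push_shuffle_eq S S' x : shuffle_eq S S' -> shuffle_eq (push S x) (push S' x).
Proof. induction 1; try solve [econstructor; eauto]. apply push_shuffle; auto. Qed.

Lemma push_all_shuffle_eq s S S' :
  shuffle_eq S S' -> shuffle_eq (fold_left push s S) (fold_left push s S').
Proof. revert S S'; induction s; simpl; auto using push_shuffle_eq. Qed.

(** * [push] respects the defining relations of the graph product *)

Lemma push_one u S : reduced S -> push S (lt C u mone) = S.
Proof.
  intros HR. unfold push, lt. simpl.
  destruct (find_vertex u S) as [[[B y] A]|] eqn:Hs.
  - apply find_vertex_sound in Hs as (-> & Hy & HB).
    destruct (reduced_letter _ _ _ HR) as [Hn _].
    destruct y as [w ya]; simpl in Hy; subst w.
    unfold merge_drop. rewrite merge_same, mone_r.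
    destruct (dec _); [contradiction|reflexivity].
  - destruct (dec _) as [|n]; [reflexivity|]. exfalso; apply n; reflexivity.
Qed.

Lemma push_mul u (a b : C u) S : reduced S ->
  shuffle_eq (push (push S (lt C u a)) (lt C u b)) (push S (lt C u (mmul a b))).
Proof.
  intros HR. unfold push at 2 3, lt. simpl.
  destruct (find_vertex u S) as [[[B y] A]|] eqn:Hs.
  - apply find_vertex_sound in Hs as (-> & Hy & HB).
    destruct (reduced_letter _ _ _ HR) as [Hn HA].
    destruct y as [w ya]; simpl in Hy, HA; subst w.
    unfold merge_drop. rewrite !merge_same.
    destruct (dec (is_one (existT _ u (mmul ya a)))) as [Ho|Hno]; simpl.
    + unfold is_one in Ho; simpl in Ho. rewrite massoc, Ho, mone_l.
      unfold push; simpl. rewrite find_vertex_skip by auto. rewrite HA.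
      destruct (dec (is_one (existT _ u b))); simpl.
      * apply rst_refl.
      * apply shuffle_eq_move. auto.
    + unfold push; simpl. rewrite find_vertex_at by auto. unfold merge_drop.
      rewrite merge_same, massoc. apply rst_refl.
  - destruct (dec (is_one (existT _ u a))) as [Ho|Hno].
    + unfold is_one in Ho; simpl in Ho. subst a. rewrite mone_l.
      destruct (dec (is_one (existT _ u mone))) as [_|n]; [|exfalso; apply n; reflexivity].
      unfold push; simpl. rewrite Hs. apply rst_refl.
    + unfold push; simpl. destruct (dec (u = u)) as [_|n]; [|exfalso; auto].
      simpl. unfold merge_drop. rewrite merge_same.
      destruct (dec _); simpl; apply rst_refl.
Qed.

Lemma app_cons_split (B1 B2 A1 A2 : list L) y z : B1 ++ y :: A1 = B2 ++ z :: A2 ->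
  (exists M, B1 = B2 ++ z :: M /\ A2 = M ++ y :: A1) \/
  (exists M, B2 = B1 ++ y :: M /\ A1 = M ++ z :: A2) \/
  (B1 = B2 /\ y = z /\ A1 = A2).
Proof.
  revert B2; induction B1 as [|b B1 IH]; intros [|c B2] H; simpl in H; inversion H; subst.
  - auto.
  - right; left. exists B2. auto.
  - left. exists B1. auto.
  - destruct (IH _ H2) as [[M [-> ->]]|[[M [-> ->]]|[-> [-> ->]]]].
    + left; exists M; auto.
    + right; left; exists M; auto.
    + auto.
Qed.

Lemma push_comm_found_both S (x1 x2 : L) B2 z M y A1 : E (projT1 x1) (projT1 x2) ->
  find_vertex (projT1 x1) S = Some (B2 ++ z :: M, y, A1) ->
  find_vertex (projT1 x2) S = Some (B2, z, M ++ y :: A1) ->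
  push (push S x1) x2 = push (push S x2) x1.
Proof.
  intros H12 H1 H2. unfold push at 2 4. rewrite H1, H2.
  apply find_vertex_sound in H1 as (HS & Hy & HB1).
  apply find_vertex_sound in H2 as (_ & Hz & HB2).
  apply Forall_app in HB1 as [HB2' HzM]. inversion HzM as [|? ? _ HM]; subst.
  unfold push. rewrite <- app_assoc. simpl.
  rewrite find_vertex_at by auto.
  replace (B2 ++ merge_drop z x2 ++ M ++ y :: A1)
    with ((B2 ++ merge_drop z x2 ++ M) ++ y :: A1) by (rewrite <- !app_assoc; reflexivity).
  rewrite find_vertex_at; auto.
  - rewrite <- !app_assoc. reflexivity.
  - apply Forall_app; split; auto. apply Forall_app; split; auto.
    apply merge_drop_adjacent. apply E_sym, H12.
Qed.

Lemma push_comm_found_one S (x1 x2 : L) B1 y A1 : E (projT1 x1) (projT1 x2) ->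
  find_vertex (projT1 x1) S = Some (B1, y, A1) ->
  find_vertex (projT1 x2) S = None ->
  push (push S x1) x2 = push (push S x2) x1.
Proof.
  intros H12 H1 H2. unfold push at 2 4. rewrite H1, H2.
  pose proof H1 as H1'. apply find_vertex_sound in H1 as (HS & Hy & HB1).
  unfold push. rewrite HS in H2.
  rewrite find_vertex_none_merge_drop; auto.
  - destruct (dec (is_one x2)).
    + rewrite H1'. reflexivity.
    + change (x2 :: S) with ([x2] ++ S). rewrite find_vertex_skip.
      * rewrite H1'. reflexivity.
      * constructor; auto. apply E_sym, H12.
  - unfold adjacent. rewrite Hy. exact H12.
Qed.

Lemma push_comm S (x1 x2 : L) : E (projT1 x1) (projT1 x2) ->
  shuffle_eq (push (push S x1) x2) (push (push S x2) x1).
Proof.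
  intros H12.
  destruct (find_vertex (projT1 x1) S) as [[[B1 y] A1]|] eqn:H1;
  destruct (find_vertex (projT1 x2) S) as [[[B2 z] A2]|] eqn:H2.
  - pose proof H1 as H1'. pose proof H2 as H2'.
    apply find_vertex_sound in H1' as (HS1 & Hy & _).
    apply find_vertex_sound in H2' as (HS2 & Hz & _).
    rewrite HS1 in HS2.
    destruct (app_cons_split _ _ _ _ _ _ HS2) as [[M [-> ->]]|[[M [-> ->]]|[-> [-> ->]]]].
    + erewrite push_comm_found_both; eauto. apply rst_refl.
    + erewrite <- push_comm_found_both; eauto. apply rst_refl.
    + exfalso. rewrite Hz in Hy. rewrite Hy in H12. eapply E_irrefl; eauto.
  - erewrite push_comm_found_one; eauto. apply rst_refl.
  - erewrite <- push_comm_found_one; eauto. apply rst_refl.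
  - assert (N1 : find_vertex (projT1 x1) (x2 :: S) = None).
    { change (x2 :: S) with ([x2] ++ S). rewrite find_vertex_skip, H1; auto.
      repeat constructor. apply E_sym, H12. }
    assert (N2 : find_vertex (projT1 x2) (x1 :: S) = None).
    { change (x1 :: S) with ([x1] ++ S). rewrite find_vertex_skip, H2; auto. }
    unfold push. rewrite H1, H2.
    destruct (dec (is_one x1)); destruct (dec (is_one x2)); cbv beta iota;
      rewrite ?N1, ?N2, ?H1, ?H2; decide_all; try apply rst_refl.
    apply (shuffle_eq_swap []). auto.
Qed.

Lemma push_all_step S l r : reduced S -> gp_step E l r ->
  shuffle_eq (fold_left push l S) (fold_left push r S).
Proof.
  intros HR H. destruct H; simpl.
  - rewrite push_one; auto. apply rst_refl.
  - apply push_mul; auto.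
  - apply (push_comm S (lt C u m) (lt C v n)). simpl. auto.
Qed.

(** * The normal form of a word *)

Definition normal_form (w : word C) : list L := fold_left push w [].

Lemma normal_form_reduced w : reduced (normal_form w).
Proof. apply reduced_push_all. simpl; auto. Qed.

Lemma gp_cong_context p w w' s : gc w w' -> gc (p ++ w ++ s) (p ++ w' ++ s).
Proof.
  induction 1 as [q l r t H| | |].
  - rewrite <- !app_assoc, (app_assoc p q (l ++ t ++ s)), (app_assoc p q (r ++ t ++ s)).
    apply gc_step; auto.
  - apply gc_refl.
  - apply gc_sym; auto.
  - eapply gc_trans; eauto.
Qed.

Lemma gp_cong_of_step l r : gp_step E l r -> gc l r.
Proof. intros H. generalize (gc_step [] [] H). simpl. rewrite !app_nil_r. auto. Qed.

Lemma gp_cong_normal_form w w' : gc w w' -> shuffle_eq (normal_form w) (normal_form w').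
Proof.
  induction 1.
  - unfold normal_form. rewrite !fold_left_app. apply push_all_shuffle_eq.
    apply push_all_step; auto. apply reduced_push_all. simpl; auto.
  - apply rst_refl.
  - apply rst_sym; auto.
  - eapply rst_trans; eauto.
Qed.

Lemma gp_step_swap (a b : L) : E (projT1 a) (projT1 b) -> gp_step E [a; b] [b; a].
Proof. destruct a as [u m], b as [w n]; simpl; intros. apply (gs_comm E C u w m n). auto. Qed.

Lemma gp_step_merge (y x : L) : projT1 y = projT1 x -> gp_step E [y; x] [merge y x].
Proof.
  destruct y as [u a], x as [w b]; simpl; intros H; subst. rewrite merge_same.
  apply (gs_mul E C w a b).
Qed.

Lemma gp_step_one (x : L) : is_one x -> gp_step E [x] [].
Proof. destruct x as [u a]; unfold is_one; simpl; intros H; subst. apply (gs_one E C u). Qed.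

Lemma gp_cong_merge_drop (y x : L) : projT1 y = projT1 x -> gc [y; x] (merge_drop y x).
Proof.
  intros H. eapply gc_trans; [apply gp_cong_of_step, gp_step_merge; auto|].
  unfold merge_drop. destruct (dec _).
  - apply gp_cong_of_step, gp_step_one; auto.
  - apply gc_refl.
Qed.

Lemma gp_cong_move (x : L) B : Forall (adjacent (projT1 x)) B ->
  gc (rev B ++ [x]) (x :: rev B).
Proof.
  induction 1 as [|b B Hb HB IH]; simpl.
  - apply gc_refl.
  - eapply gc_trans.
    + rewrite <- app_assoc. simpl. apply (gp_cong_context (rev B) [b; x] [x; b] []).
      apply gp_cong_of_step, gp_step_swap. exact Hb.
    + generalize (gp_cong_context [] _ _ [b] IH).
      simpl. rewrite <- !app_assoc. simpl. rewrite ?app_nil_r. auto.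
Qed.

Lemma gp_cong_push S (x : L) : gc (rev S ++ [x]) (rev (push S x)).
Proof.
  unfold push. destruct (find_vertex (projT1 x) S) as [[[B y] A]|] eqn:Hs.
  - apply find_vertex_sound in Hs as (-> & Hy & HB).
    rewrite !rev_app_distr, rev_merge_drop. simpl. rewrite <- !app_assoc. simpl.
    eapply gc_trans.
    + generalize (gp_cong_context (rev A ++ [y]) _ _ [] (gp_cong_move x B HB)).
      rewrite <- !app_assoc. simpl. rewrite app_nil_r. intros H; exact H.
    + generalize (gp_cong_context (rev A) [y; x] (merge_drop y x) (rev B)
                   (gp_cong_merge_drop y x Hy)).
      simpl. auto.
  - destruct (dec (is_one x)) as [Ho|].
    + generalize (gp_cong_context (rev S) [x] [] [] (gp_cong_of_step _ _ (gp_step_one x Ho))).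
      rewrite !app_nil_r. auto.
    + apply gc_refl.
Qed.

Lemma gp_cong_push_all w S : gc (rev S ++ w) (rev (fold_left push w S)).
Proof.
  revert S; induction w as [|x w IH]; intros S; simpl.
  - rewrite app_nil_r. apply gc_refl.
  - eapply gc_trans; [|apply IH].
    replace (rev S ++ x :: w) with ((rev S ++ [x]) ++ w) by (rewrite <- app_assoc; reflexivity).
    apply (gp_cong_context [] _ _ w (gp_cong_push S x)).
Qed.

Lemma gp_cong_normal_form_rev w : gc w (rev (normal_form w)).
Proof. apply (gp_cong_push_all w []). Qed.

Variable v : V.

Definition letter_value (y : L) : C v :=
  match dec (projT1 y = v) with
  | left e => eq_rect _ (fun w => mcar (C w)) (projT2 y) _ e
  | right _ => mone
  end.

Lemma letter_value_same (a : C v) : letter_value (existT _ v a) = a.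
Proof.
  unfold letter_value; simpl. destruct (dec (v = v)) as [e|n].
  - rewrite (proof_irrelevance _ e eq_refl). reflexivity.
  - exfalso; auto.
Qed.

Definition v_tail (S : list L) : C v :=
  match find_vertex v S with Some (_, y, _) => letter_value y | None => mone end.

Definition v_head (S : list L) : list L :=
  match find_vertex v S with Some (B, _, A) => B ++ A | None => S end.

Lemma gp_cong_v_head_tail S : gc (rev S) (rev (v_head S) ++ [lt C v (v_tail S)]).
Proof.
  unfold v_head, v_tail. destruct (find_vertex v S) as [[[B y] A]|] eqn:Hs.
  - apply find_vertex_sound in Hs as (-> & Hy & HB).
    destruct y as [w a]; simpl in Hy; subst w. rewrite letter_value_same.
    rewrite !rev_app_distr. simpl. rewrite <- !app_assoc. simpl.
    apply gc_sym.
    generalize (gp_cong_context (rev A) _ _ [] (gp_cong_move (lt C v a) B HB)).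
    rewrite !app_nil_r. auto.
  - apply gc_sym.
    generalize (gp_cong_context (rev S) _ _ [] (gp_cong_of_step _ _ (gs_one E C v))).
    rewrite !app_nil_r. auto.
Qed.

Lemma v_tail_head_push S d : reduced S ->
  v_tail (push S (lt C v d)) = mmul (v_tail S) d /\ v_head (push S (lt C v d)) = v_head S.
Proof.
  intros HR. unfold push, lt. simpl.
  destruct (find_vertex v S) as [[[B y] A]|] eqn:Hs.
  - pose proof Hs as Hs'.
    apply find_vertex_sound in Hs as (-> & Hy & HB).
    destruct (reduced_letter _ _ _ HR) as [Hn HA].
    destruct y as [w ya]; simpl in Hy, HA; subst w.
    unfold v_tail, v_head. rewrite Hs'. rewrite letter_value_same.
    unfold merge_drop. rewrite merge_same.
    destruct (dec (is_one (existT _ v (mmul ya d)))) as [Ho|Hno]; simpl.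
    + rewrite find_vertex_skip by auto. rewrite HA. unfold is_one in Ho; simpl in Ho. auto.
    + rewrite find_vertex_at by auto. rewrite letter_value_same. auto.
  - unfold v_tail, v_head. rewrite Hs.
    destruct (dec (is_one (existT _ v d))) as [Ho|Hno].
    + rewrite Hs. unfold is_one in Ho; simpl in Ho. subst d. rewrite mone_l. auto.
    + simpl. destruct (dec (v = v)) as [_|n]; [|exfalso; auto].
      rewrite letter_value_same, mone_l. auto.
Qed.

Lemma gp_cong_rev_swap P (a b : L) Q : E (projT1 a) (projT1 b) ->
  gc (rev (P ++ a :: b :: Q)) (rev (P ++ b :: a :: Q)).
Proof.
  intros H. rewrite !rev_app_distr. simpl. rewrite <- !app_assoc. simpl.
  apply (gp_cong_context (rev Q) [b; a] [a; b] (rev P)).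
  apply gp_cong_of_step, gp_step_swap. auto.
Qed.

Lemma v_tail_head_shuffle S S' : shuffle S S' ->
  v_tail S = v_tail S' /\ gc (rev (v_head S)) (rev (v_head S')).
Proof.
  destruct 1 as [P a b Q Hab]. unfold v_tail, v_head.
  destruct (find_swap v P a b Q Hab)
    as [H1 H2|B y P2 -> H1 H2|ea H1 H2|eb H1 H2|B' y A H1 H2]; rewrite H1, H2;
    split; auto.
  - apply gp_cong_rev_swap; auto.
  - rewrite !app_assoc. apply gp_cong_rev_swap; auto.
  - rewrite <- app_assoc. apply gc_refl.
  - rewrite <- app_assoc. apply gc_refl.
  - rewrite <- !app_assoc. simpl. apply gp_cong_rev_swap; auto.
Qed.

Lemma v_tail_head_shuffle_eq S S' : shuffle_eq S S' ->
  v_tail S = v_tail S' /\ gc (rev (v_head S)) (rev (v_head S')).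
Proof.
  induction 1 as [S S' H| |S S' H [IH1 IH2]|S1 S2 S3 H1 [IH1 IH2] H2 [IH3 IH4]].
  - apply v_tail_head_shuffle; auto.
  - split; auto. apply gc_refl.
  - split; auto. apply gc_sym; auto.
  - split; [congruence|]. eapply gc_trans; eauto.
Qed.

(** * The factorisation [X = head X * tail X] in the graph product *)

Local Notation G := (GP E C).

Lemma gp_class_eq w1 w2 : gc w1 w2 -> gp_class E w1 = gp_class E w2.
Proof.
  intros H. apply (eq_sig_hprop (fun _ => proof_irrelevance _)). simpl.
  apply functional_extensionality; intros w.
  apply propositional_extensionality. split; intros H'.
  - eapply gc_trans; [apply gc_sym; exact H|exact H'].
  - eapply gc_trans; eauto.
Qed.

Lemma gp_rep_spec (X : G) : proj1_sig X = gc (gp_rep X).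
Proof. exact (proj2_sig (IndefiniteDescription.constructive_indefinite_description _ (proj2_sig X))). Qed.

Lemma gp_class_rep (X : G) : gp_class E (gp_rep X) = X.
Proof.
  apply (eq_sig_hprop (fun _ => proof_irrelevance _)). symmetry. apply gp_rep_spec.
Qed.

Lemma gp_rep_class (w : word C) : gc (gp_rep (gp_class E w)) w.
Proof. rewrite <- (gp_rep_spec (gp_class E w)). apply gc_refl. Qed.

Lemma gp_cong_app a a' b b' : gc a a' -> gc b b' -> gc (a ++ b) (a' ++ b').
Proof.
  intros H1 H2. eapply gc_trans.
  - apply (gp_cong_context [] _ _ b H1).
  - generalize (gp_cong_context a' _ _ [] H2). rewrite !app_nil_r. auto.
Qed.

Lemma gp_mul_class (a b : word C) :
  gp_mul (gp_class E a) (gp_class E b) = gp_class E (a ++ b).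
Proof. unfold gp_mul. apply gp_class_eq, gp_cong_app; apply gp_rep_class. Qed.

Definition incl (d : C v) : G := gp_class E [lt C v d].

Definition gp_tail (X : G) : C v := v_tail (normal_form (gp_rep X)).
Definition gp_head (X : G) : G := gp_class E (rev (v_head (normal_form (gp_rep X)))).

Lemma gp_tail_head_class (w : word C) :
  gp_tail (gp_class E w) = v_tail (normal_form w) /\
  gp_head (gp_class E w) = gp_class E (rev (v_head (normal_form w))).
Proof.
  unfold gp_tail, gp_head.
  destruct (v_tail_head_shuffle_eq _ _ (gp_cong_normal_form _ _ (gp_rep_class w)))
    as [H1 H2].
  split; auto. apply gp_class_eq; auto.
Qed.

Lemma gp_head_tail X : X = gp_mul (gp_head X) (incl (gp_tail X)).
Proof.
  unfold gp_head, gp_tail, incl. rewrite gp_mul_class. rewrite <- (gp_class_rep X) at 1.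
  apply gp_class_eq. eapply gc_trans.
  - apply gp_cong_normal_form_rev.
  - apply gp_cong_v_head_tail.
Qed.

Lemma gp_tail_head_mul_incl X d :
  gp_tail (gp_mul X (incl d)) = mmul (gp_tail X) d /\ gp_head (gp_mul X (incl d)) = gp_head X.
Proof.
  rewrite <- (gp_class_rep X). unfold incl. rewrite gp_mul_class.
  destruct (gp_tail_head_class (gp_rep X ++ [lt C v d])) as [-> ->].
  destruct (gp_tail_head_class (gp_rep X)) as [-> ->].
  unfold normal_form. rewrite fold_left_app. simpl.
  destruct (v_tail_head_push (fold_left push (gp_rep X) []) d) as [-> ->].
  - apply normal_form_reduced.
  - auto.
Qed.

(* The normal form is needed exactly here: right multiples of [incl] agree
   only for the obvious reason. *)
Lemma gp_mul_incl_eq Z Y d a : gp_mul Z (incl d) = gp_mul Y (incl a) ->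
  exists W p q, Z = gp_mul W (incl p) /\ Y = gp_mul W (incl q) /\ mmul p d = mmul q a.
Proof.
  intros H. exists (gp_head Z), (gp_tail Z), (gp_tail Y).
  destruct (gp_tail_head_mul_incl Z d) as [T1 H1].
  destruct (gp_tail_head_mul_incl Y a) as [T2 H2].
  rewrite H in T1, H1. split; [apply gp_head_tail|split].
  - rewrite <- H1, H2. apply gp_head_tail.
  - rewrite <- T1, <- T2. reflexivity.
Qed.

Lemma gp_mul_incl_incl Z c a : gp_mul (gp_mul Z (incl c)) (incl a) = gp_mul Z (incl (mmul c a)).
Proof.
  rewrite <- (gp_class_rep Z). unfold incl. rewrite !gp_mul_class. apply gp_class_eq.
  rewrite <- app_assoc. simpl.
  generalize (gp_cong_context (gp_rep Z) _ _ [] (gp_cong_of_step _ _ (gs_mul E C v c a))).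
  rewrite !app_nil_r. auto.
Qed.

Lemma gp_mul_incl_one Z : gp_mul Z (incl mone) = Z.
Proof.
  rewrite <- (gp_class_rep Z) at 2. unfold incl. rewrite <- (gp_class_rep Z) at 1.
  rewrite gp_mul_class. apply gp_class_eq.
  generalize (gp_cong_context (gp_rep Z) _ _ [] (gp_cong_of_step _ _ (gs_one E C v))).
  rewrite !app_nil_r. auto.
Qed.

Lemma gp_one_mul_incl c : gp_mul (gp_class E []) (incl c) = incl c.
Proof. unfold incl. rewrite gp_mul_class. reflexivity. Qed.

Lemma gp_tail_incl c : gp_tail (incl c) = c.
Proof.
  rewrite <- gp_one_mul_incl. destruct (gp_tail_head_mul_incl (gp_class E []) c) as [-> _].
  destruct (gp_tail_head_class []) as [-> _]. apply mone_l.
Qed.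

(** * Extending partial bijections of [C v] to the graph product *)

Definition extend (f : prel (C v)) : prel G :=
  fun x y => exists Z c d, f c d /\ x = gp_mul Z (incl c) /\ y = gp_mul Z (incl d).

Lemma extend_releq f g : releq f g -> releq (extend f) (extend g).
Proof.
  intros H x y; split; intros (Z & c & d & Hf & -> & ->); exists Z, c, d;
    split; auto; apply H; auto.
Qed.

Lemma extend_eq : releq (extend (@eq (C v))) (@eq G).
Proof.
  intros x y; split.
  - intros (Z & c & d & <- & -> & ->). reflexivity.
  - intros <-. exists x, mone, mone. rewrite gp_mul_incl_one. auto.
Qed.

Lemma extend_empty f : releq f (@rempty (C v)) -> releq (extend f) (@rempty G).
Proof.
  intros H x y; split; [|intros []].
  intros (Z & c & d & Hf & _). apply (H c d), Hf.
Qed.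

Lemma extend_rcomp f g : left_invariant f -> left_invariant g ->
  releq (extend (rcomp f g)) (rcomp (extend f) (extend g)).
Proof.
  intros Lf Lg x y; split.
  - intros (Z & c & e & (d & Hf & Hg) & -> & ->).
    exists (gp_mul Z (incl d)). split; [exists Z, c, d|exists Z, d, e]; auto.
  - intros (m & (Z & c & d & Hf & -> & Hm) & (W & c' & e' & Hg & Hm' & ->)).
    rewrite Hm' in Hm.
    destruct (gp_mul_incl_eq _ _ _ _ (eq_sym Hm)) as (Y & p & q & -> & -> & Hpq).
    exists Y, (mmul p c), (mmul q e'). split; [|split].
    + exists (mmul p d). split; auto. rewrite Hpq. auto.
    + rewrite gp_mul_incl_incl. reflexivity.
    + rewrite gp_mul_incl_incl. reflexivity.
Qed.

Lemma extend_rho f a : releq (extend (rcomp f (rho (@mmul (C v)) a)))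
  (rcomp (extend f) (rho (@gp_mul V E C) (incl a))).
Proof.
  intros x y; split.
  - intros (Z & c & e & (d & Hf & He) & -> & ->).
    exists (gp_mul Z (incl d)). split; [exists Z, c, d; auto|].
    unfold rho. rewrite gp_mul_incl_incl, He. reflexivity.
  - intros (m & (Z & c & d & Hf & -> & ->) & Hy).
    unfold rho in Hy. rewrite gp_mul_incl_incl in Hy. subst y.
    exists Z, c, (mmul d a). split; auto. exists d. split; auto. reflexivity.
Qed.

Lemma extend_rho_inv f a : left_invariant f ->
  releq (extend (rcomp f (rinv (rho (@mmul (C v)) a))))
    (rcomp (extend f) (rinv (rho (@gp_mul V E C) (incl a)))).
Proof.
  intros Lf x y; split.
  - intros (Z & c & e & (d & Hf & He) & -> & ->).
    exists (gp_mul Z (incl d)). split; [exists Z, c, d; auto|].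
    unfold rinv, rho in *. rewrite gp_mul_incl_incl, He. reflexivity.
  - intros (m & (Z & c & d & Hf & -> & ->) & Hy). unfold rinv, rho in Hy.
    destruct (gp_mul_incl_eq _ _ _ _ Hy) as (W & p & q & -> & -> & Hpq).
    exists W, (mmul p c), q. split; [|split].
    + exists (mmul p d). split; auto.
    + rewrite gp_mul_incl_incl. reflexivity.
    + reflexivity.
Qed.

Lemma extend_IH f : IH (@mmul (C v)) f -> IH (@gp_mul V E C) (extend f).
Proof.
  induction 1 as [|a f Hf IHf|a f Hf IHf|f g Hf IHf Hfg].
  - eapply IH_ext; [apply IH_id|]. apply releq_sym, extend_eq.
  - eapply IH_ext; [apply (IH_r (incl a) IHf)|]. apply releq_sym, extend_rho.
  - eapply IH_ext; [apply (IH_ri (incl a) IHf)|]. apply releq_sym, extend_rho_inv.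
    apply IH0_left_invariant. left; exact Hf.
  - eapply IH_ext; [apply IHf|]. apply extend_releq, Hfg.
Qed.

Lemma extend_incl_reflect f g : left_invariant g ->
  (forall x y, extend f x y -> extend g x y) -> forall c d, f c d -> g c d.
Proof.
  intros Lg H c d Hf.
  assert (Hp : extend f (incl c) (incl d)).
  { exists (gp_class E []), c, d. rewrite !gp_one_mul_incl. auto. }
  apply H in Hp as (Z & c' & d' & Hg & Hc & Hd).
  apply (f_equal gp_tail) in Hc, Hd.
  rewrite (proj1 (gp_tail_head_mul_incl Z c')), gp_tail_incl in Hc.
  rewrite (proj1 (gp_tail_head_mul_incl Z d')), gp_tail_incl in Hd.
  rewrite Hc, Hd. apply Lg, Hg.
Qed.

End Embedding.

Theorem proposition2p8 (V : Type) (E : V -> V -> Prop) (C : V -> Monoid) :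
  is_graph E ->
  (forall v, left_LCM (C v)) ->
  forall v : V,
  exists phi : prel (C v) -> prel (GP E C),
    (forall f, IH0 (@mmul (C v)) f -> IH0 (@gp_mul V E C) (phi f)) /\
    (forall f g, IH0 (@mmul (C v)) f -> IH0 (@mmul (C v)) g ->
       releq f g -> releq (phi f) (phi g)) /\
    (forall f g, IH0 (@mmul (C v)) f -> IH0 (@mmul (C v)) g ->
       releq (phi (rcomp f g)) (rcomp (phi f) (phi g))) /\
    releq (phi (@eq (C v))) (@eq (GP E C)) /\
    (forall f g, IH0 (@mmul (C v)) f -> IH0 (@mmul (C v)) g ->
       releq (phi f) (phi g) -> releq f g).
Proof.
  intros [E_irrefl E_sym] _ v.
  exists (extend V E C v). split; [|split; [|split; [|split]]].
  - intros f [Hf|Hf].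
    + left. apply extend_IH; auto.
    + right. apply extend_empty, Hf.
  - intros f g _ _. apply extend_releq.
  - intros f g Hf Hg. apply extend_rcomp; auto using IH0_left_invariant.
  - apply extend_eq.
  - intros f g Hf Hg H x y.
    split; apply extend_incl_reflect with (E := E); auto using IH0_left_invariant;
      intros; apply H; auto.
Qed.
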